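(* Let $X\times G\to X$ be a continuous right action of a locally compact Hausdorff group on a Hausdorff space, and let $F\subseteq X$ be a closed paracompact subset such that the action is $F$-proper. Then $FG\subseteq X$ is closed and paracompact.
   Context: For $A,B\subseteq X$ set $\langle A:B\rangle:=\{g\in G: Bg\cap A\neq\emptyset\}$ and write $A\perp B$ if it is relatively compact in $G$. For closed $F$, the action is $F$-proper if for every $x\in X$ there are neighborhoods $V_x\ni x$ and $V_F\supseteq F$ with $V_F\perp V_x$. *)

From HB Require Import structures.
From mathcomp Require Import all_boot all_order all_algebra.
From mathcomp Require Import all_classical all_reals all_analysis.
Set Implicit Arguments. Unset Strict Implicit. Unset Printing Implicit Defensive.
Local Open Scope classical_set_scope.

Definition topological_group (G : topologicalType)
    (mul : G -> G -> G) (inv : G -> G) (e : G) : Prop :=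
  [/\ (forall a b c, mul a (mul b c) = mul (mul a b) c),
      (forall a, mul e a = a /\ mul a e = a),
      (forall a, mul (inv a) a = e /\ mul a (inv a) = e),
      continuous (fun p : G * G => mul p.1 p.2) &
      continuous inv].

Definition continuous_right_action (X G : topologicalType)
    (mul : G -> G -> G) (e : G) (act : X -> G -> X) : Prop :=
  [/\ (forall x, act x e = x),
      (forall x g h, act (act x g) h = act x (mul g h)) &
      continuous (fun p : X * G => act p.1 p.2)].

Definition transporter (X G : Type) (act : X -> G -> X) (A B : set X) : set G :=
  [set g | exists x, B x /\ A (act x g)].

Definition perp (X G : topologicalType) (act : X -> G -> X) (A B : set X) :=
  precompact (transporter act A B).

Definition set_nbhs (X : topologicalType) (F V : set X) :=
  exists O, [/\ open O, F `<=` O & O `<=` V].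

Definition F_proper (X G : topologicalType) (act : X -> G -> X) (F : set X) :=
  forall x : X, exists Vx VF,
    [/\ nbhs x Vx, set_nbhs F VF & perp act VF Vx].

(* A subset A of X is paracompact (in the subspace topology): every cover of
   A by open sets of X (equivalently, every cover by relatively open sets) has
   a refinement by relatively open subsets of A that covers A and is locally
   finite in A. *)
Definition paracompact_set (X : topologicalType) (A : set X) : Prop :=
  forall U : set (set X), (forall u, U u -> open u) -> A `<=` \bigcup_(u in U) u ->
  exists V : set (set X),
    [/\ (forall v, V v -> exists w, open w /\ v = A `&` w),
        A `<=` \bigcup_(v in V) v,
        (forall v, V v -> exists u, U u /\ v `<=` u) &
        (forall x, A x -> exists w, [/\ open w, w x &
             finite_set [set v | V v /\ v `&` w !=set0]])].

Definition saturation (X G : Type) (act : X -> G -> X) (F : set X) : set X :=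
  [set y | exists x g, F x /\ y = act x g].

From HB Require Import structures.
From mathcomp Require Import all_boot all_order all_algebra.
From mathcomp Require Import all_classical all_reals all_analysis.
Set Implicit Arguments. Unset Strict Implicit. Unset Printing Implicit Defensive.
Local Open Scope classical_set_scope.

(* By Michael's criterion it suffices to refine every open cover [U] of [FG] by a
   locally finite family of closed sets.  Cover [G] by a locally finite family of
   compact sets [L] (translates of the shells [V^(n+2) \ V^n V°] of a compact
   symmetric neighbourhood [V] of [e]).  For each [L], the tube lemma and the
   paracompactness of [F] give a locally finite closed cover of [F] by sets [c]
   with [c (L ∩ P) ⊆ u ∈ U] for finitely many closed [P] covering [L].  The sets
   [c (L ∩ P)] cover [FG]; they are closed and locally finite because, by
   [F]-properness, near any point only a compact set of group elements brings a
   point back into [F]. *)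

Lemma filter_forall_finite (T I : Type) (F : set_system T) (D : set I)
    (P : I -> set T) : Filter F -> finite_set D ->
  (forall i, D i -> F (P i)) -> F [set z | forall i, D i -> P i z].
Proof.
elim/Pchoice: I => I in D P *; move=> FF /finite_fsetP[D' ->] DP.
by apply: filterS (filter_bigI _ DP) => z DPz i /DPz.
Qed.

Lemma compact_nbhs_subcover (T : topologicalType) (I : Type) (K : set T)
    (D : set I) (f : I -> set T) : compact K ->
  (forall k, K k -> exists2 i, D i & nbhs k (f i)) ->
  exists D0, [/\ finite_set D0, D0 `<=` D & K `<=` \bigcup_(i in D0) f i].
Proof.
move=> /compact_near_coveringP cK Kf.
pose finD := [set Q : set (set I) | exists D0, [/\ finite_set D0, D0 `<=` D &
  forall E, D0 `<=` E -> Q E]].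
have finD_filter : Filter finD.
  split; first by exists set0; split => //; exact: finite_set0.
    move=> Q1 Q2 [D1 [fD1 D1D Q1E]] [D2 [fD2 D2D Q2E]].
    exists (D1 `|` D2); split; [by rewrite finite_setU | by move=> i [/D1D|/D2D] |].
    by move=> E DE; split; [apply: Q1E | apply: Q2E] => i Di; apply: DE; [left|right].
  by move=> Q1 Q2 Q12 [D1 [fD1 D1D Q1E]]; exists D1; split => // E /Q1E/Q12.
have [|D0 [fD0 D0D D0K]] := cK _ finD
    (fun E k => exists2 i, (E `&` D) i & f i k) finD_filter.
  move=> k /Kf[i Di fik]; exists (f i, [set E | E i]) => //.
    by split => //; exists [set i]; split => [|j ->|E]; [exact: finite_set1 | | apply].
  by move=> [z E] /= [fiz Ei]; exists i.
exists (D0 `&` D); split; [exact: finite_setIl | by move=> i [] |].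
by move=> k /(D0K D0 (@subset_refl _ D0))[i D0Di fik]; exists i.
Qed.

Definition meeting (T : Type) (S : set (set T)) (w : set T) :=
  [set s | S s /\ s `&` w !=set0].

Lemma meetingS (T : Type) (S : set (set T)) (w w' : set T) :
  w `<=` w' -> meeting S w `<=` meeting S w'.
Proof. by move=> ww' s [Ss [z [sz wz]]]; split => //; exists z; split; last exact: ww'. Qed.

Definition locally_finite_at (T : topologicalType) (S : set (set T)) (x : T) :=
  exists2 w, nbhs x w & finite_set (meeting S w).

Definition locally_finite (T : topologicalType) (S : set (set T)) :=
  forall x, locally_finite_at S x.

Lemma locally_finite_at_open (T : topologicalType) (S : set (set T)) (x : T) :
  locally_finite_at S x -> exists w, [/\ open w, w x & finite_set (meeting S w)].
Proof.
case=> w xw fw; exists w°; split; [exact: open_interior | exact: xw |].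
by apply: sub_finite_set fw; apply: meetingS; exact: interior_subset.
Qed.

Lemma compact_locally_finite (T : topologicalType) (S : set (set T)) (K : set T) :
  compact K -> (forall k, K k -> locally_finite_at S k) ->
  exists O, [/\ open O, K `<=` O & finite_set (meeting S O)].
Proof.
move=> cK Slf.
have [|D [fD Dfin KD]] := @compact_nbhs_subcover _ _ K
    [set w | open w /\ finite_set (meeting S w)] id cK.
  move=> k /Slf/locally_finite_at_open[w [ow wk fw]].
  by exists w => //; exact: open_nbhs_nbhs.
exists (\bigcup_(w in D) w); split => //; first by apply: bigcup_open => w /Dfin[].
apply: sub_finite_set (bigcup_finite fD (fun w Dw => (Dfin w Dw).2)).
by move=> s [Ss [z [sz [w Dw wz]]]]; exists w => //; split => //; exists z.
Qed.

Lemma closed_bigcup_locally_finite (T : topologicalType) (S : set (set T)) :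
  (forall s, S s -> closed s) -> locally_finite S -> closed (\bigcup_(s in S) s).
Proof.
move=> Scl Slf y cly; apply: contrapT => ny.
have [w yw fw] := Slf y.
have : nbhs y (w `&` [set z | forall s, meeting S w s -> ~ s z]).
  apply: filterI yw (filter_forall_finite _ fw _) => s [Ss _].
  apply: open_nbhs_nbhs; split; first exact: closed_openC (Scl s Ss).
  by move=> sy; apply: ny; exists s.
by move=> /cly[z [[s Ss sz] [wz Hz]]]; apply: (Hz s) => //; split => //; exists z.
Qed.

Definition lf_closed_refinement (T : topologicalType) (U : set (set T))
    (A : set T) (S : set (set T)) :=
  [/\ forall s, S s -> closed s, A `<=` \bigcup_(s in S) s,
      forall s, S s -> exists2 u, U u & s `<=` u & locally_finite S].

Lemma set_choice_in (A T : Type) (D : set A) (P : A -> set T -> Prop) :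
  (forall a, D a -> exists b, P a b) -> exists f, forall a, D a -> P a (f a).
Proof.
move=> DP; have /choice[f Pf] : forall a, exists b, D a -> P a b.
  by move=> a; have [/DP[b Pab]|nDa] := pselect (D a); [exists b | exists set0].
by exists f.
Qed.

Lemma closure_subset_closed (T : topologicalType) (A F : set T) :
  closed F -> A `<=` F -> closure A `<=` F.
Proof. by move=> cF AF; rewrite closureE; exact: smallest_sub. Qed.

Section ParacompactSubset.
Variables (T : topologicalType) (F : set T).
Hypotheses (hT : hausdorff_space T) (cF : closed F) (pF : paracompact_set F).

(* Paracompact Hausdorff spaces are regular; only the trace on [F] is needed. *)
Lemma paracompact_set_regular x n : F x -> open n -> n x ->
  exists2 m, open_nbhs x m & closure (F `&` m) `<=` n.
Proof.
move=> Fx on nx.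
pose U := [set u | u = n \/ open u /\ exists2 P, open_nbhs x P & P `&` u = set0].
have oU u : U u -> open u by case=> [->|[]].
have FU : F `<=` \bigcup_(u in U) u.
  move=> f Ff; have [nf|nnf] := pselect (n f); first by exists n => //; left.
  have xf : x != f by apply: contra_notN nnf => /eqP <-.
  move: hT; rewrite open_hausdorff => /(_ _ _ xf)[[A B] /=].
  rewrite !inE => -[xA fB] [oA oB AB0].
  by exists B => //; right; split => //; exists A => //; apply/eqP.
have [V [Vtr FV VU Vlf]] := pF oU FU.
have [w [ow wx fw]] := Vlf x Fx.
pose W := w `&` [set z | forall v, meeting V w v -> v `<=` n \/ ~ v z].
have xW : nbhs x W.
  apply: filterI; first exact: open_nbhs_nbhs.
  apply: filter_forall_finite fw _ => v [Vv _].
  have [vn|nvn] := pselect (v `<=` n); first by apply: filterS filterT => z; left.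
  have [u [[un|[_ [P [oP Px] Pu]]] vu]] := VU v Vv.
    by rewrite un in vu.
  apply: filterS (open_nbhs_nbhs (conj oP Px)) => z Pz; right => vz.
  have Puz : (P `&` u) z by split => //; exact: vu.
  by rewrite Pu in Puz.
exists W°; first by split; [exact: open_interior | exact: xW].
move=> y cly; have Fy : F y := closure_subset_closed cF (@subIsetl _ F W°) cly.
have [v Vv vy] := FV y Fy; have [wv [owv vE]] := Vtr v Vv.
have wvy : wv y by move: vy; rewrite vE => -[].
have [z [[Fz /interior_subset[wz Wz]] wvz]] := cly wv (open_nbhs_nbhs (conj owv wvy)).
have vz : v z by rewrite vE.
by case: (Wz v) => [|/(_ y vy)//|//]; split => //; exists z.
Qed.

Lemma paracompact_closed_refinement (N : set (set T)) :
  (forall n, N n -> open n) -> F `<=` \bigcup_(n in N) n ->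
  exists C, lf_closed_refinement N F C /\ forall c, C c -> c `<=` F.
Proof.
move=> oN FN.
pose N' := [set m | open m /\ exists2 n, N n & closure (F `&` m) `<=` n].
have oN' m : N' m -> open m by case.
have FN' : F `<=` \bigcup_(m in N') m.
  move=> x Fx; have [n Nn nx] := FN x Fx.
  have [m [om mx] Fmn] := paracompact_set_regular Fx (oN n Nn) nx.
  by exists m => //; split => //; exists n.
have [V [Vtr FV VN' Vlf]] := pF oN' FN'.
have VF v : V v -> v `<=` F by move=> /Vtr[w [_ ->]] z [].
have clVF c : (closure @` V) c -> c `<=` F.
  by case=> v Vv <-; exact: closure_subset_closed (VF v Vv).
exists (closure @` V); split => //; split.
- by move=> _ [v Vv <-]; exact: closed_closure.
- by move=> x /FV[v Vv vx]; exists (closure v); [exists v | exact: subset_closure].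
- move=> _ [v Vv <-]; have [m [[_ [n Nn Fmn]] vm]] := VN' v Vv.
  exists n => //; apply: subset_trans Fmn; apply: closureS => z vz.
  by split; [exact: VF vz | exact: vm].
move=> x; have [Fx|nFx] := pselect (F x).
  have [w [ow wx fw]] := Vlf x Fx; exists w; first exact: open_nbhs_nbhs.
  apply: sub_finite_set (finite_image closure fw) => _ [[v Vv <-] [z [clz wz]]].
  exists v => //; split => //.
  by have [z' [vz' wz']] := clz w (open_nbhs_nbhs (conj ow wz)); exists z'.
exists (~` F); first by apply: open_nbhs_nbhs; split => //; exact: closed_openC.
apply: (sub_finite_set _ (@finite_set0 (set T))) => c [/clVF cF' [z [cz nFz]]].
by apply: nFz; exact: cF'.
Qed.

End ParacompactSubset.

(* Michael's criterion for paracompactness, relative to a subset. *)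
Lemma paracompact_set_lf_closed_refinement (T : topologicalType) (A : set T) :
  (forall U, (forall u, U u -> open u) -> A `<=` \bigcup_(u in U) u ->
    exists S, lf_closed_refinement U A S) -> paracompact_set A.
Proof.
move=> lfcr U oU AU; have [S [Scl AS SU Slf]] := lfcr U oU AU.
pose O := [set o | open o /\ finite_set (meeting S o)].
have [|R [Rcl AR RO Rlf]] := lfcr O (fun o (Oo : O o) => Oo.1).
  move=> y _; have [w [ow wy fw]] := locally_finite_at_open (Slf y).
  by exists w.
have RSfin r : R r -> finite_set (meeting S r).
  by move=> /RO[ob [_ fob] rob]; apply: sub_finite_set fob; exact: meetingS.
(* A member of [R] meets [env s] only if it meets [s]. *)
pose env s := ~` \bigcup_(r in [set r | R r /\ r `&` s = set0]) r.
have env_open s : open (env s).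
  apply/closed_openC/closed_bigcup_locally_finite => [r [Rr _]|y]; first exact: Rcl.
  have [w yw fw] := Rlf y; exists w => //.
  by apply: sub_finite_set fw => r [[Rr _] rw].
have [u Su] : exists u, forall s, S s -> U (u s) /\ s `<=` u s.
  apply: (set_choice_in (P := fun s u => U u /\ s `<=` u)).
  by move=> s /SU[u Uu su]; exists u.
pose V s := A `&` (env s `&` u s).
exists (V @` S); split.
- move=> _ [s Ss <-]; exists (env s `&` u s); split => //.
  exact: openI (env_open s) (oU _ (Su s Ss).1).
- move=> y Ay; have [s Ss sy] := AS y Ay; exists (V s); first by exists s.
  split=> //; split; last exact: (Su s Ss).2.
  by move=> [r [Rr rs0] ry]; have : (r `&` s) y by []; rewrite rs0.
- by move=> _ [s Ss <-]; exists (u s); split; [exact: (Su s Ss).1 | move=> z [_ []]].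
move=> y Ay; have [w [ow wy fw]] := locally_finite_at_open (Rlf y).
exists w; split => //.
apply: (@sub_finite_set _ _ (V @` \bigcup_(r in meeting R w) meeting S r)).
  move=> _ [[s Ss <-] [z [[Az [envz uz]] wz]]]; exists s => //.
  have [r Rr rz] := AR z Az; exists r; first by split => //; exists z.
  split => //; apply: contrapT => nrs; apply: envz; exists r => //; split => //.
  by apply/seteqP; split => // a [ra sa]; apply: nrs; exists a.
by apply/finite_image/bigcup_finite => // r [Rr _]; exact: RSfin.
Qed.

Lemma locally_compact_regular (T : topologicalType) :
  hausdorff_space T -> locally_compact [set: T] -> regular_space T.
Proof.
move=> hT lcT x; have [C xC [cC _]] := lcT x I.
by apply: compact_regular hT cC _; move: xC; rewrite withinET.
Qed.

Section TopologicalGroup.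
Variables (G : topologicalType) (mul : G -> G -> G) (inv : G -> G) (e : G).
Hypothesis tg : topological_group mul inv e.

Lemma mulA a b c : mul a (mul b c) = mul (mul a b) c.
Proof. by case: tg. Qed.

Lemma mul1g a : mul e a = a.
Proof. by case: tg => _ /(_ a)[]. Qed.

Lemma mulg1 a : mul a e = a.
Proof. by case: tg => _ /(_ a)[]. Qed.

Lemma mulVg a : mul (inv a) a = e.
Proof. by case: tg => _ _ /(_ a)[]. Qed.

Lemma mulgV a : mul a (inv a) = e.
Proof. by case: tg => _ _ /(_ a)[]. Qed.

Lemma mulKg a b : mul (inv a) (mul a b) = b.
Proof. by rewrite mulA mulVg mul1g. Qed.

Lemma mulKVg a b : mul a (mul (inv a) b) = b.
Proof. by rewrite mulA mulgV mul1g. Qed.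

Lemma inv_eq a b : mul a b = e -> a = inv b.
Proof. by move=> abe; rewrite -[a]mulg1 -(mulgV b) mulA abe mul1g. Qed.

Lemma inv1 : inv e = e.
Proof. by rewrite -[inv e]mulg1 mulVg. Qed.

Lemma invK a : inv (inv a) = a.
Proof. by apply/esym/inv_eq; rewrite mulgV. Qed.

Lemma invM a b : inv (mul a b) = mul (inv b) (inv a).
Proof. by apply/esym/inv_eq; rewrite -mulA mulKg mulVg. Qed.

Lemma mul_near a b (A : set G) : nbhs (mul a b) A ->
  exists P Q, [/\ nbhs a P, nbhs b Q & forall z h, P z -> Q h -> A (mul z h)].
Proof.
case: tg => _ _ _ mulC _ /(mulC (a, b))[[P Q] /= [aP bQ] PQA].
by exists P, Q; split => // z h Pz Qh; exact: (PQA (z, h)).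
Qed.

Lemma continuous_mull a : continuous (mul a).
Proof.
move=> g A /mul_near[P [Q [aP gQ PQA]]].
by apply: filterS gQ => h; exact: PQA _ _ (nbhs_singleton aP).
Qed.

Lemma nbhs_inv a (A : set G) : nbhs (inv a) A -> nbhs a (inv @^-1` A).
Proof. by case: tg => _ _ _ _ invC /(invC a). Qed.

Lemma compact_inv (K : set G) : compact K -> compact (inv @^-1` K).
Proof.
have -> : inv @^-1` K = inv @` K.
  apply/seteqP; split => [g Kg|_ [g Kg <-]]; last by rewrite /= invK.
  by exists (inv g); rewrite ?invK.
by case: tg => _ _ _ _ invC; apply/continuous_compact/continuous_subspaceT.
Qed.

Hypotheses (hG : hausdorff_space G) (lcG : locally_compact [set: G]).

Lemma symmetric_compact_nbhs1 :
  exists V, [/\ nbhs e V, compact V & forall g, V g -> V (inv g)].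
Proof.
have [C eC [cC _]] := lcG (I : [set: G] e); move: eC; rewrite withinET => eC.
exists (C `&` inv @^-1` C); split.
- by apply: filterI; [exact: eC | apply: nbhs_inv; rewrite inv1].
- apply: (subclosed_compact _ cC (@subIsetl _ _ _)).
  exact: closedI (compact_closed hG cC) (compact_closed hG (compact_inv cC)).
- by move=> g [Cg Cig]; split; rewrite // /= invK.
Qed.

Section ShellCover.
Variable V : set G.
Hypotheses (eV : nbhs e V) (cV : compact V) (V_inv : forall g, V g -> V (inv g)).

Fixpoint vpow n : set G :=
  if n is n'.+1 then [set mul a v | a in vpow n' & v in V] else [set e].

Lemma vpow_compact n : compact (vpow n).
Proof.
elim: n => [|n IHn] /=; first exact: compact_set1.
rewrite image2E (_ : uncurry mul = fun p => mul p.1 p.2); last by apply/funext => -[].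
apply: continuous_compact (compact_setX IHn cV).
by case: tg => _ _ _ mulC _; exact: continuous_subspaceT.
Qed.

Lemma vpowS n a : vpow n a -> vpow n.+1 a.
Proof.
by move=> na; exists a => //; exists e; rewrite ?mulg1 //; exact: nbhs_singleton.
Qed.

Lemma vpow_le m n a : (m <= n)%N -> vpow m a -> vpow n a.
Proof. by move=> /subnK <-; elim: (n - m)%N => // k IHk /IHk /vpowS. Qed.

Lemma vpowD m n a b : vpow m a -> vpow n b -> vpow (m + n) (mul a b).
Proof.
move=> ma; elim: n b => [|n IHn] b /=; first by move=> ->; rewrite mulg1 addn0.
by case=> c nc [v Vv <-]; rewrite addnS mulA; exists (mul a c); [exact: IHn | exists v].
Qed.

Lemma vpowV n a : vpow n a -> vpow n (inv a).
Proof.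
elim: n a => [|n IHn] a /=; first by move=> ->; rewrite inv1.
case=> b nb [v Vv <-]; rewrite invM; apply: (@vpowD 1 n) (IHn _ nb).
by exists e; rewrite ?mul1g //; exists (inv v); rewrite ?mul1g //; exact: V_inv.
Qed.

Definition vpow_nbhd n := [set mul a v | a in vpow n & v in V°].

Lemma open_vpow_nbhd n : open (vpow_nbhd n).
Proof.
rewrite openE => _ [a na [v Vv <-]].
have Vav : nbhs (mul (inv a) (mul a v)) V°.
  by rewrite mulKg; apply: open_nbhs_nbhs; split; first exact: open_interior.
have : nbhs (mul a v) (mul (inv a) @^-1` V°) := @continuous_mull (inv a) _ _ Vav.
by apply: filterS => z Vaz; exists a => //; exists (mul (inv a) z); rewrite ?mulKVg.
Qed.

Lemma vpow_sub_nbhd n : vpow n `<=` vpow_nbhd n.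
Proof.
by move=> a na; exists a => //; exists e; rewrite ?mulg1 //; exact: nbhs_interior.
Qed.

Lemma vpow_nbhd_sub n : vpow_nbhd n `<=` vpow n.+1.
Proof. by move=> _ [a na [v /interior_subset Vv <-]]; exists a => //; exists v. Qed.

Lemma vpow_nbhd_le m n : (m <= n)%N -> vpow_nbhd m `<=` vpow_nbhd n.
Proof. by move=> mn _ [a ma [v Vv <-]]; exists a; [exact: vpow_le ma | exists v]. Qed.

(* The shells [V, V^2 \ V^0 V°, V^3 \ V V°, ...] cover the open subgroup generated by [V];
   [vpow_nbhd m] is a neighbourhood of [V^m] meeting only the first [m + 1] of them. *)
Definition shell n :=
  if n is n'.+1 then vpow n'.+2 `\` vpow_nbhd n' else vpow 1.

Lemma shell_vpow n : shell n `<=` vpow n.+1.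
Proof. by case: n => [|n] //= a []. Qed.

Lemma shell_compact n : compact (shell n).
Proof.
apply: (subclosed_compact _ (@vpow_compact n.+1) (@shell_vpow n)).
case: n => [|n]; first exact: compact_closed hG (@vpow_compact 1).
apply: closedI (compact_closed hG (@vpow_compact _)) _.
exact: open_closedC (@open_vpow_nbhd n).
Qed.

Lemma vpow_shell m a : vpow m a -> exists n, shell n a.
Proof.
move=> /vpowS; elim: m a => [|m IHm] a; first by exists 0%N.
have [/vpow_nbhd_sub/IHm//|na ma] := pselect (vpow_nbhd m a).
by exists m.+1.
Qed.

Lemma shell_vpow_nbhd n m a : shell n a -> vpow_nbhd m a -> (n <= m)%N.
Proof.
case: n => [|n] //= [_ nna] ma; rewrite ltnNge; apply/negP => mn.
exact/nna/(vpow_nbhd_le mn).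
Qed.

Definition same_coset g h := exists n, vpow n (mul (inv g) h).

Lemma same_coset_refl g : same_coset g g.
Proof. by exists 0%N; rewrite /= mulVg. Qed.

Lemma same_coset_sym g h : same_coset g h -> same_coset h g.
Proof. by case=> n /vpowV; rewrite invM invK; exists n. Qed.

Lemma same_coset_trans g h k : same_coset g h -> same_coset h k -> same_coset g k.
Proof.
by case=> m gh [n hk]; exists (m + n)%N; rewrite -(mulKVg h k) mulA; exact: vpowD.
Qed.

Definition coset_rep g := xget e (same_coset g).

Lemma same_coset_rep g : same_coset g (coset_rep g).
Proof. by apply: xgetPex; exists g; exact: same_coset_refl. Qed.

Lemma coset_rep_eq g h : same_coset g h -> coset_rep g = coset_rep h.
Proof.
move=> gh; rewrite /coset_rep; congr xget; apply/funext => k; apply/propext.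
by split; [apply: same_coset_trans (same_coset_sym gh) | apply: same_coset_trans gh].
Qed.

Definition shells := [set L | exists c n, coset_rep c = c /\ L = mul c @` shell n].

Lemma shells_compact L : shells L -> compact L.
Proof.
case=> c [n [_ ->]]; apply: continuous_compact (@shell_compact n).
exact/continuous_subspaceT/continuous_mull.
Qed.

Lemma shells_cover : [set: G] `<=` \bigcup_(L in shells) L.
Proof.
move=> g _; set c := coset_rep g.
have [m /vpow_shell[n gn]] := same_coset_sym (same_coset_rep g).
exists (mul c @` shell n); last by exists (mul (inv c) g); rewrite ?mulKVg.
by exists c, n; split => //; apply/esym/coset_rep_eq/same_coset_rep.
Qed.

Lemma shells_locally_finite : locally_finite shells.
Proof.
move=> g; set c := coset_rep g; have [m gm] := same_coset_sym (same_coset_rep g).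
exists (mul (inv c) @^-1` vpow_nbhd m).
  apply: continuous_mull; apply: open_nbhs_nbhs; split; first exact: open_vpow_nbhd.
  exact: vpow_sub_nbhd.
apply: sub_finite_set (finite_image (fun n => mul c @` shell n) (finite_II m.+1)).
move=> L [[c' [n [c'_rep ->]]] [_ [[r nr <-] /= mr]]].
have c'c : c' = c.
  rewrite -c'_rep; apply: coset_rep_eq.
  apply: (@same_coset_trans _ (mul c' r)).
    by exists n.+1; rewrite mulKg; exact: shell_vpow.
  apply: (@same_coset_trans _ c); last exact: same_coset_sym (same_coset_rep g).
  by apply: same_coset_sym; exists m.+1; exact: vpow_nbhd_sub.
move: mr; rewrite c'c mulKg => mr; exists n => //.
by rewrite /= ltnS; exact: shell_vpow_nbhd nr mr.
Qed.

End ShellCover.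

Lemma locally_compact_group_lf_cover : exists Lf : set (set G),
  [/\ forall L, Lf L -> compact L, [set: G] `<=` \bigcup_(L in Lf) L & locally_finite Lf].
Proof.
have [V [eV cV V_inv]] := symmetric_compact_nbhs1.
exists (shells V); split; [exact: shells_compact | exact: shells_cover |].
exact: shells_locally_finite eV V_inv.
Qed.

End TopologicalGroup.

Section Action.
Variables (X G : topologicalType) (mul : G -> G -> G) (inv : G -> G) (e : G)
  (act : X -> G -> X).
Hypotheses (tg : topological_group mul inv e) (ca : continuous_right_action mul e act).

Lemma act1 x : act x e = x.
Proof. by case: ca. Qed.

Lemma actM x g h : act (act x g) h = act x (mul g h).
Proof. by case: ca. Qed.

Lemma actK x g : act (act x g) (inv g) = x.
Proof. by rewrite actM (mulgV tg) act1. Qed.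

Lemma act_near x g (A : set X) : nbhs (act x g) A ->
  exists P Q, [/\ nbhs x P, nbhs g Q & forall z h, P z -> Q h -> A (act z h)].
Proof.
case: ca => _ _ actC /(actC (x, g))[[P Q] /= [xP gQ PQA]].
by exists P, Q; split => // z h Pz Qh; exact: (PQA (z, h)).
Qed.

Lemma continuous_act x : continuous (act x).
Proof.
move=> g A /act_near[P [Q [xP gQ PQA]]].
by apply: filterS gQ => h; exact: PQA _ _ (nbhs_singleton xP).
Qed.

Definition act_set (A : set X) (L : set G) := [set act x g | x in A & g in L].

Lemma act_setSl A B L : A `<=` B -> act_set A L `<=` act_set B L.
Proof. by move=> AB _ [x Ax [g Lg <-]]; exists x; [exact: AB | exists g]. Qed.

Lemma saturationE A : saturation act A = act_set A [set: G].
Proof.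
apply/seteqP; split => [_ [x [g [Ax ->]]]|_ [x Ax [g _ <-]]]; last by exists x, g.
by exists x => //; exists g.
Qed.

Variable F : set X.
Hypotheses (cF : closed F) (FP : F_proper act F).

Lemma F_proper_return (y : X) : exists W (K : set G), [/\ nbhs y W, compact K &
  forall z g, W z -> F (act z g) -> K g].
Proof.
have [W [VF [yW [OF [oOF FOF OFV]] [K WK [cK _]]]]] := FP y.
by exists W, K; split => // z g Wz Fzg; apply: WK; exists z; split => //; exact/OFV/FOF.
Qed.

Lemma act_set_closed A L : A `<=` F -> closed A -> closed L -> closed (act_set A L).
Proof.
move=> AF cA cL y cly; apply: contrapT => nALy.
have [W [K [yW cK WK]]] := F_proper_return y.
have : \forall z \near y, K `<=` [set k | ~ (A (act z k) /\ L (inv k))].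
  have /compact_near_coveringP Kcov := cK.
  apply: (Kcov X (nbhs y) (fun z k => ~ (A (act z k) /\ L (inv k)))) => k Kk.
  have [Ayk|nAyk] := pselect (A (act y k)).
    have nLk : ~ L (inv k).
      by move=> Lk; apply: nALy; exists (act y k) => //; exists (inv k); rewrite ?actK.
    have : nbhs k (inv @^-1` (~` L)).
      by apply: (nbhs_inv tg); apply: open_nbhs_nbhs; split => //; exact: closed_openC.
    move=> kL; exists (inv @^-1` (~` L), setT); first by split => //; exact: filterT.
    by move=> [k' z] /= [nLk' _] [].
  have : nbhs (act y k) (~` A) by apply: open_nbhs_nbhs; split => //; exact: closed_openC.
  move=> /act_near[P [Q [yP kQ PQA]]]; exists (Q, P); first by split.
  by move=> [k' z] /= [Qk' Pz] [Azk _]; exact: (PQA z k').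
move=> /(filterI yW)/cly[_ [[x Ax [g Lg <-]] [Wxg xgK]]].
have Kg : K (inv g) by apply: WK Wxg _; rewrite actK; exact: AF.
by apply: (xgK _ Kg); rewrite actK (invK tg).
Qed.

Lemma saturation_closed : closed (saturation act F).
Proof. by rewrite saturationE; apply: act_set_closed => //; exact: closedT. Qed.

Hypotheses (hG : hausdorff_space G) (lcG : locally_compact [set: G]).

Definition tube_cover (U : set (set X)) (L : set G) (n : set X) (Pi : set (set G)) :=
  [/\ finite_set Pi,
      (forall P, Pi P -> closed P /\ exists2 u, U u & act_set n P `<=` u) &
      L `<=` \bigcup_(P in Pi) P].

Lemma tube_coverSl U L m n Pi : m `<=` n -> tube_cover U L n Pi -> tube_cover U L m Pi.
Proof.
move=> mn [fPi PiU LPi]; split => // P /PiU[clP [u Uu nPu]]; split => //.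
by exists u => //; apply: subset_trans nPu; exact: act_setSl.
Qed.

(* The tube lemma, with closed tubes; closedness comes from the regularity of [G]. *)
Lemma tube_cover_exists U L x : compact L -> (forall u, U u -> open u) ->
  act x @` L `<=` \bigcup_(u in U) u ->
  exists n, [/\ open n, n x & exists Pi, tube_cover U L n Pi].
Proof.
move=> cL oU xLU.
pose good := [set p : set X * set G | [/\ open p.1, p.1 x, closed p.2 &
  exists2 u, U u & act_set p.1 p.2 `<=` u]].
have good_cover g : L g -> exists2 p, good p & nbhs g p.2.
  move=> Lg; have [u Uu uxg] := xLU _ (imageP _ Lg).
  have /act_near[P [Q [xP gQ PQu]]] : nbhs (act x g) u.
    by apply: open_nbhs_nbhs; split => //; exact: oU.
  have [B gB BQ] := locally_compact_regular hG lcG gQ.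
  exists (P°, closure B); last exact: filterS (@subset_closure _ B) gB.
  split => //=; [exact: open_interior | exact: closed_closure |].
  by exists u => // _ [z /interior_subset Pz [h /BQ Qh <-]]; exact: PQu.
have [D [fD Dgood LD]] := compact_nbhs_subcover (f := snd) cL good_cover.
pose n := [set z | forall p, D p -> p.1 z].
have xn : nbhs x n.
  by apply: filter_forall_finite fD _ => p /Dgood[op px _ _]; exact: open_nbhs_nbhs.
exists n°; split; [exact: open_interior | exact: xn | exists (snd @` D); split].
- exact: finite_image.
- move=> _ [p Dp <-]; have [_ _ clp [u Uu pu]] := Dgood p Dp; split => //.
  exists u => //; apply: subset_trans pu; apply: act_setSl.
  by move=> z /interior_subset/(_ p Dp).
- by move=> g /LD[p Dp pg]; exists p.2 => //; exists p.
Qed.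

Section TubeRefinement.
Variables (U : set (set X)) (Lf : set (set G)) (C : set G -> set (set X))
  (Pi : set G -> set X -> set (set G)).
Hypotheses (Lf_compact : forall L, Lf L -> compact L) (Lf_lf : locally_finite Lf)
  (Lf_cover : [set: G] `<=` \bigcup_(L in Lf) L)
  (C_closed : forall L c, Lf L -> C L c -> closed c /\ c `<=` F)
  (C_cover : forall L, Lf L -> F `<=` \bigcup_(c in C L) c)
  (C_lf : forall L, Lf L -> locally_finite (C L))
  (Pi_tube : forall L c, Lf L -> C L c -> tube_cover U L c (Pi L c)).

Definition tube_refinement :=
  [set s | exists L c P, [/\ Lf L, C L c, Pi L c P & s = act_set c (L `&` P)]].

Lemma tube_refinement_closed s : tube_refinement s -> closed s.
Proof.
move=> [L [c [P [LfL Cc PiP ->]]]]; have [clc cF'] := C_closed LfL Cc.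
have [_ /(_ P PiP)[clP _] _] := Pi_tube LfL Cc.
apply: act_set_closed => //; apply: closedI clP.
exact: compact_closed hG (Lf_compact LfL).
Qed.

Lemma tube_refinement_cover : saturation act F `<=` \bigcup_(s in tube_refinement) s.
Proof.
move=> _ [x [g [Fx ->]]]; have [L LfL Lg] := @Lf_cover g I.
have [c Cc cx] := C_cover LfL Fx.
have [_ _ /(_ g Lg)[P PiP Pg]] := Pi_tube LfL Cc.
by exists (act_set c (L `&` P)); [exists L, c, P | exists x => //; exists g].
Qed.

Lemma tube_refinement_sub s : tube_refinement s -> exists2 u, U u & s `<=` u.
Proof.
move=> [L [c [P [LfL Cc PiP ->]]]].
have [_ /(_ P PiP)[_ [u Uu cPu]] _] := Pi_tube LfL Cc.
exists u => //; apply: subset_trans cPu => _ [x cx [h [_ Ph] <-]].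
by exists x => //; exists h.
Qed.

(* A point [y] has a neighbourhood [W] sent into [F] only by the elements of a
   compact [K]; the members meeting [W] then come from the finitely many [L]
   meeting [K^-1] and, for each of them, from the finitely many [c] meeting a
   neighbourhood of [yK ∩ F]. *)
Lemma tube_refinement_locally_finite : locally_finite tube_refinement.
Proof.
move=> y; have [W [K [yW cK WK]]] := F_proper_return y.
have [Kn [_ KKn fKn]] := compact_locally_finite (compact_inv tg cK) (fun k _ => Lf_lf k).
have cyK : compact (act y @` K `&` F).
  apply: compact_closedI cF; apply: continuous_compact cK.
  exact/continuous_subspaceT/continuous_act.
have [Yn Yn_lf] : exists Yn : set G -> set X, forall L, Lf L ->
    [/\ open (Yn L), act y @` K `&` F `<=` Yn L & finite_set (meeting (C L) (Yn L))].
  apply: (set_choice_in (P := fun L Y =>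
    [/\ open Y, act y @` K `&` F `<=` Y & finite_set (meeting (C L) Y)])).
  by move=> L LfL; apply: compact_locally_finite cyK _ => k [_ Fk]; exact: C_lf.
pose E L := act_set (F `\` Yn L) (inv @^-1` K).
have yE L : Lf L -> nbhs y (~` E L).
  move=> LfL; have [oYn yKYn _] := Yn_lf L LfL.
  apply: open_nbhs_nbhs; split.
    apply/closed_openC/act_set_closed; first by move=> z [].
    - exact: closedI cF (open_closedC oYn).
    - exact: compact_closed hG (compact_inv tg cK).
  move=> [x [Fx nYnx] [h Kih yE]]; apply: nYnx; apply: yKYn; split => //.
  by exists (inv h) => //; rewrite -yE actK.
exists (W `&` [set z | forall L, meeting Lf Kn L -> ~ E L z]).
  apply: filterI yW (filter_forall_finite _ fKn _) => L [LfL _]; exact: yE.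
apply: (@sub_finite_set _ _ (\bigcup_(L in meeting Lf Kn)
  \bigcup_(c in meeting (C L) (Yn L)) (fun P => act_set c (L `&` P)) @` Pi L c)).
  move=> _ [[L [c [P [LfL Cc PiP ->]]]] [_ [[x cx [h [Lh Ph] <-]] [Wxh xhE]]]].
  have Fx : F x by have [_] := C_closed LfL Cc; apply.
  have Kih : K (inv h) by apply: WK Wxh _; rewrite actK.
  have KnL : meeting Lf Kn L by split => //; exists h; split => //; exact: KKn.
  exists L => //; exists c; last by exists P.
  split => //; exists x; split => //; apply: contrapT => nYnx.
  by apply: (xhE L KnL); exists x => //; exists h.
apply: bigcup_finite => // L [LfL _]; have [_ _ fYn] := Yn_lf L LfL.
apply: bigcup_finite => // c [Cc _]; have [fPi _ _] := Pi_tube LfL Cc.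
exact: finite_image.
Qed.

Lemma tube_refinement_lf_closed :
  lf_closed_refinement U (saturation act F) tube_refinement.
Proof.
split; [exact: tube_refinement_closed | exact: tube_refinement_cover |
  exact: tube_refinement_sub | exact: tube_refinement_locally_finite].
Qed.

End TubeRefinement.

Hypotheses (hX : hausdorff_space X) (pF : paracompact_set F).

Lemma saturation_lf_closed_refinement U : (forall u, U u -> open u) ->
  saturation act F `<=` \bigcup_(u in U) u ->
  exists S, lf_closed_refinement U (saturation act F) S.
Proof.
move=> oU FGU.
have [Lf [Lf_compact Lf_cover Lf_lf]] := locally_compact_group_lf_cover tg hG lcG.
pose N L := [set n | open n /\ exists Pi, tube_cover U L n Pi].
have [C HC] : exists C : set G -> set (set X), forall L, Lf L ->
    lf_closed_refinement (N L) F (C L) /\ forall c, C L c -> c `<=` F.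
  apply: (set_choice_in (P := fun L C =>
    lf_closed_refinement (N L) F C /\ forall c, C c -> c `<=` F)) => L LfL.
  apply: (paracompact_closed_refinement hX cF pF) => [n []//|x Fx].
  have [|n [on nx tn]] := @tube_cover_exists U L x (Lf_compact L LfL) oU.
    by move=> _ [g _ <-]; apply: FGU; exists x, g.
  by exists n.
have [Pi HPi] : exists Pi : set G * set X -> set (set G), forall Lc,
    Lf Lc.1 /\ C Lc.1 Lc.2 -> tube_cover U Lc.1 Lc.2 (Pi Lc).
  apply: (set_choice_in (P := fun Lc Pi => tube_cover U Lc.1 Lc.2 Pi)).
  move=> [L c] [/= LfL Cc]; have [[_ _ /(_ c Cc)[n [_ [Pi tn]] cn] _] _] := HC L LfL.
  by exists Pi; exact: tube_coverSl cn tn.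
exists (tube_refinement Lf C (fun L c => Pi (L, c))).
apply: tube_refinement_lf_closed => //.
- by move=> L c LfL Cc; have [[clC _ _ _] CF] := HC L LfL; split; [exact: clC | exact: CF].
- by move=> L /HC[[_ FC _ _] _].
- by move=> L /HC[[_ _ _ Clf] _].
- by move=> L c LfL Cc; exact: HPi.
Qed.

End Action.

Theorem corollary2p12 (X G : topologicalType)
    (mul : G -> G -> G) (inv : G -> G) (e : G) (act : X -> G -> X)
    (F : set X) :
  topological_group mul inv e ->
  locally_compact [set: G] -> hausdorff_space G ->
  hausdorff_space X ->
  continuous_right_action mul e act ->
  closed F -> paracompact_set F ->
  F_proper act F ->
  closed (saturation act F) /\ paracompact_set (saturation act F).
Proof.
move=> tg lcG hG hX ca cF pF FP; split; first exact (saturation_closed tg ca cF FP).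
refine (paracompact_set_lf_closed_refinement _) => U oU FGU.
exact (saturation_lf_closed_refinement tg ca cF FP hG lcG hX pF oU FGU).
Qed.
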